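(* Let $n_x,n_\beta\ge 1$, $A\in\mathbb{R}^{n_x\times n_x}$, $u\in\mathbb{R}^{n_x}$, $L\in\mathbb{R}^{n_x\times n_\beta}$, $Q_\beta\in\mathbb{R}^{n_\beta\times n_\beta}$ a diffusion (covariance) matrix, $\overline{x}_a\in\mathbb{R}^{n_x}$, $P_a\in\mathbb{R}^{n_x\times n_x}$ a covariance matrix, $\mu>0$ and $\Delta t_k>0$. For $t\ge 0$ define $$m(t)=\exp(At)\overline{x}_a+\int_0^t\exp(A\tau)\,d\tau\, u,\qquad C(t)=\exp(At)P_a\exp(A^Tt)+\int_0^t \exp(A\tau)LQ_\beta L^T\exp(A^T\tau)\,d\tau .$$ Let $T$ be a random time lag with density $p_k(t)=\frac{\mu}{1-e^{-\mu\Delta t_k}}e^{-\mu t}\chi_{[0,\Delta t_k)}(t)$, and consider the single-target birth density $p_k(x)=\int_0^{\Delta t_k}\mathcal{N}(x;m(t),C(t))p_k(t)\,dt$ (a mixture whose conditional mean and covariance given lag $t$ are $\mathrm{E}[x_k|t]=m(t)$ and $\mathrm{C}[x_k|t]=C(t)$). Then the mean of $p_k$ is $$\overline{x}_{b,k}=\mathrm{E}[m(T)]=\overline{x}_{b,k,1}+\overline{x}_{b,k,2},$$ where, with $I$ the $n_x\times n_x$ identity and $0_{m,n}$ the $m\times n$ zero matrix, $$\overline{x}_{b,k,1}=\frac{\mu}{1-e^{-\mu\Delta t_k}}\begin{bmatrix}I & 0_{n_x,1}\end{bmatrix}\exp(\overline{A}_b\Delta t_k)\begin{bmatrix}0_{n_x,1}\\1\end{bmatrix},\quad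 \overline{x}_{b,k,2}=\frac{\mu}{1-e^{-\mu\Delta t_k}}\begin{bmatrix}I & 0_{n_x,2}\end{bmatrix}\exp(\overline{A}_{b,u}\Delta t_k)\begin{bmatrix}0_{n_x+1,1}\\1\end{bmatrix},$$ $$\overline{A}_b=\begin{bmatrix}A-\mu I & \overline{x}_a\\ 0_{1,n_x} & 0\end{bmatrix},\qquad \overline{A}_{b,u}=\begin{bmatrix}A-\mu I & u & 0_{n_x,1}\\ 0_{1,n_x} & -\mu & 1\\ 0_{1,n_x} & 0 & 0\end{bmatrix}.$$ The covariance matrix of $p_k$ is $P_{b,k}=\mathrm{C}[m(T)]+\mathrm{E}[C(T)]$, where $$\mathrm{E}[C(T)]=-\frac{e^{-\mu\Delta t_k}}{1-e^{-\mu\Delta t_k}}\int_0^{\Delta t_k}\exp(A\tau)LQ_\beta L^T\exp(A^T\tau)\,d\tau+\frac{1}{1-e^{-\mu\Delta t_k}}\int_0^{\Delta t_k}\exp\big((A-\tfrac{\mu}{2}I)t\big)C_b\exp\big((A-\tfrac{\mu}{2}I)^Tt\big)\,dt,$$ with $C_b=LQ_\beta L^T+\mu P_a$, and $$\mathrm{C}[m(T)]=\Sigma_{xx}+\Sigma_{xu}+\Sigma_{xu}^T+\Sigma_{uu}-\overline{x}_{b,k}\overline{x}_{b,k}^T,$$ where $$\Sigma_{xx}=\frac{\mu}{1-e^{-\mu\Delta t_k}}\int_0^{\Delta t_k}\exp\big((A-\tfrac{\mu}{2}I)t\big)\overline{x}_a\overline{x}_a^T\exp\big((A-\tfrac{\mu}{2}I)^Tt\big)dt,$$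 $$\Sigma_{xu}=\frac{\mu}{1-e^{-\mu\Delta t_k}}\int_0^{\Delta t_k}\exp\big((A-\mu I)t\big)\overline{x}_a u^T\Big(\int_0^t\exp(A^T\tau)d\tau\Big)dt,$$ $\Sigma_{uu}=-\Sigma_{uu,1}+\Sigma_{uu,2}+\Sigma_{uu,2}^T$, $$\Sigma_{uu,1}=\frac{e^{-\mu\Delta t_k}}{1-e^{-\mu\Delta t_k}}\int_0^{\Delta t_k}\exp(A\tau)d\tau\, uu^T\int_0^{\Delta t_k}\exp(A^T\tau)d\tau,$$ $$\Sigma_{uu,2}=\frac{1}{1-e^{-\mu\Delta t_k}}\int_0^{\Delta t_k}\exp\big((A-\mu I)t\big)uu^T\Big(\int_0^t\exp(A^T\tau)d\tau\Big)dt.$$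
   Context: This arises from a continuous-time multi-target model: targets appear at times of a Poisson process, each appearing target is distributed as $\mathcal{N}(\overline{x}_a,P_a)$ at appearance, its life span is exponential with rate $\mu$, and it moves according to the linear time-invariant SDE $dx(t)=Ax(t)dt+u\,dt+L\,d\beta(t)$ with $\beta$ a Brownian motion with diffusion matrix $Q_\beta$. A target newly born at measurement time $t_k$ (with $\Delta t_k=t_k-t_{k-1}$) is one that appeared at time $t_k-t$ with lag $t\in[0,\Delta t_k)$ and is still alive at $t_k$; the lag has the truncated exponential density $p_k(t)$ above and, given the lag, the target state at $t_k$ is Gaussian with mean $m(t)$ and covariance $C(t)$. $\chi_{[0,\Delta t_k)}$ is the indicator function of $[0,\Delta t_k)$. *)

From HB Require Import structures.
From mathcomp Require Import all_boot all_order all_algebra.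
From mathcomp Require Import all_classical all_reals all_analysis.
Set Implicit Arguments. Unset Strict Implicit. Unset Printing Implicit Defensive.
Import Order.TTheory GRing.Theory Num.Theory.
Import numFieldNormedType.Exports.
Local Open Scope classical_set_scope.
Local Open Scope ring_scope.

Section Defs.
Variable R : realType.

Definition expm (n : nat) (M : 'M[R]_n) : 'M[R]_n :=
  \matrix_(i, j) limn (fun N => \sum_(0 <= k < N) ((M ^+ k) i j / (k`!)%:R)).

Definition mxint (m n : nat) (D : set R) (F : R -> 'M[R]_(m, n)) : 'M[R]_(m, n) :=
  \matrix_(i, j) Rintegral lebesgue_measure D (fun t => F t i j).

Definition lag_const (mu dt : R) : R := mu / (1 - expR (- mu * dt)).

Definition lag_density (mu dt : R) (t : R) : R :=
  if (0 <= t) && (t < dt) then lag_const mu dt * expR (- mu * t) else 0.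

Definition lagE (mu dt : R) (m n : nat) (F : R -> 'M[R]_(m, n)) : 'M[R]_(m, n) :=
  mxint setT (fun t => lag_density mu dt t *: F t).

Definition mean_t (nx : nat) (A : 'M[R]_nx) (u xa : 'cV[R]_nx) (t : R) : 'cV[R]_nx :=
  expm (t *: A) *m xa + mxint `[0, t] (fun tau => expm (tau *: A)) *m u.

Definition cov_t (nx nb : nat) (A : 'M[R]_nx) (L : 'M[R]_(nx, nb)) (Q : 'M[R]_nb)
  (Pa : 'M[R]_nx) (t : R) : 'M[R]_nx :=
  expm (t *: A) *m Pa *m expm (t *: A^T)
  + mxint `[0, t] (fun tau => expm (tau *: A) *m L *m Q *m L^T *m expm (tau *: A^T)).

(* mean of the mixture p_k(x) = int N(x; m(t), C(t)) p_k(t) dt,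
   computed from the conditional moments (law of total expectation) *)
Definition birth_mean nx (A : 'M[R]_nx) u xa mu dt : 'cV[R]_nx :=
  lagE mu dt (mean_t A u xa).

(* covariance of the mixture (law of total covariance from conditional moments):
   E[C(T) + m(T) m(T)^T] - mean mean^T *)
Definition birth_cov nx nb (A : 'M[R]_nx) (L : 'M[R]_(nx, nb)) Q Pa u xa mu dt
  : 'M[R]_nx :=
  lagE mu dt (fun t => cov_t A L Q Pa t + mean_t A u xa t *m (mean_t A u xa t)^T)
  - birth_mean A u xa mu dt *m (birth_mean A u xa mu dt)^T.

Definition is_cov (n : nat) (M : 'M[R]_n) : Prop :=
  M^T = M /\ forall v : 'cV[R]_n, 0 <= (v^T *m M *m v) ord0 ord0.

End Defs.

From HB Require Import structures.
From mathcomp Require Import all_boot all_order all_algebra.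
From mathcomp Require Import all_classical all_reals all_analysis.
From mathcomp Require Import ring lra.
Set Implicit Arguments. Unset Strict Implicit. Unset Printing Implicit Defensive.
Import Order.TTheory GRing.Theory Num.Theory.
Import numFieldNormedType.Exports.
Local Open Scope classical_set_scope.
Local Open Scope ring_scope.

(* Each moment is a lag expectation c * int_0^dt e^{-mu t} F(t) dt, where F is
   built from exp(tA) and its integrals.  Since e^{-mu t} exp(tA) = exp(t(A - mu I))
   (both solve X' = X (A - mu I), X 0 = I), every such integral is evaluated by
   exhibiting an explicit primitive and applying the fundamental theorem of
   calculus; the factors e^{-mu t} int_0^t g are handled by integration by parts.
   The block-matrix form of the mean follows from the same uniqueness argument:
   exp(t [[M, b], [0, 0]]) = [[exp(tM), int_0^t exp(sM) b ds], [0, 1]]. *)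

Section MatrixExponential.
Variable R : realType.
Implicit Types (n : nat) (x t : R).

(* Coefficients of the power series of the p-th derivative of t |-> exp(tM) i j. *)
Definition expm_coeff n (M : 'M[R]_n) (p : nat) (i j : 'I_n) (k : nat) : R :=
  (M ^+ (k + p)) i j / (k`!)%:R.

Definition mx_abssum n (M : 'M[R]_n) : R := \sum_i \sum_j `|M i j|.

Lemma mx_abssum_ge0 n (M : 'M[R]_n) : 0 <= mx_abssum M.
Proof. by apply: sumr_ge0 => i _; apply: sumr_ge0. Qed.

Lemma row_abssum_le n (M : 'M[R]_n) i : \sum_l `|M i l| <= mx_abssum M.
Proof.
rewrite /mx_abssum [leRHS](bigD1 i) //= lerDl.
by apply: sumr_ge0 => *; apply: sumr_ge0.
Qed.

Lemma normr_exprmx_le n (M : 'M[R]_n) k i j : `|(M ^+ k) i j| <= mx_abssum M ^+ k.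
Proof.
elim: k i j => [|k IH] i j.
  by rewrite expr0 !mxE; case: (i == j); rewrite ?normr1 ?normr0.
rewrite exprS -mulmxE mxE; apply: (le_trans (ler_norm_sum _ _ _)).
apply: (@le_trans _ _ (\sum_l `|M i l| * mx_abssum M ^+ k)).
  by apply: ler_sum => l _; rewrite normrM ler_wpM2l.
rewrite -mulr_suml exprS ler_wpM2r ?exprn_ge0 ?mx_abssum_ge0 //.
exact: row_abssum_le.
Qed.

(* The series is dominated by |M|^p exp(|M| |x|), with |M| the entrywise l1 norm. *)
Lemma is_cvg_pseries_expm_coeff n (M : 'M[R]_n) p i j x :
  cvgn (pseries (expm_coeff M p i j) x).
Proof.
apply: normed_cvg; set B := mx_abssum M.
have B0 : 0 <= B by exact: mx_abssum_ge0.
apply: (@series_le_cvg _ _ (fun k => B ^+ p * exp_coeff (B * `|x|) k)).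
- by move=> k; exact: normr_ge0.
- by move=> k; rewrite mulr_ge0 ?exprn_ge0 // /exp_coeff divr_ge0 ?exprn_ge0 ?mulr_ge0.
- move=> k; rewrite /= /expm_coeff /exp_coeff /= !normrM normrX normfV normr_nat.
  have -> : B ^+ p * ((B * `|x|) ^+ k / k`!%:R) = B ^+ (k + p) / k`!%:R * `|x| ^+ k.
    by rewrite exprMn exprD; ring.
  rewrite ler_wpM2r ?exprn_ge0 // ler_wpM2r ?invr_ge0 ?ler0n //.
  exact: normr_exprmx_le.
- by apply: is_cvg_seriesZ; exact: is_cvg_series_exp_coeff.
Qed.

Lemma pseries_diffs_expm_coeff n (M : 'M[R]_n) p i j :
  pseries_diffs (expm_coeff M p i j) = expm_coeff M p.+1 i j.
Proof.
apply/funext => k; rewrite /pseries_diffs /expm_coeff factS natrM invfM addSnnS.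
have k1 : 1 + k%:R != 0 :> R by rewrite addrC natr1 pnatr_eq0.
have kf : k`!%:R != 0 :> R by rewrite pnatr_eq0 -lt0n fact_gt0.
by field; rewrite kf k1.
Qed.

Lemma exprZ_mx n (M : 'M[R]_n) t k : (t *: M) ^+ k = t ^+ k *: M ^+ k.
Proof.
elim: k => [|k IH]; first by rewrite !expr0 scale1r.
by rewrite !exprS -!mulmxE IH -scalemxAl -scalemxAr scalerA.
Qed.

Lemma expmZ_entry n (M : 'M[R]_n) t i j :
  expm (t *: M) i j = limn (pseries (expm_coeff M 0 i j) t).
Proof.
rewrite /expm mxE; congr (limn _); apply/funext => N.
rewrite /pseries /series /=; apply: eq_bigr => k _.
by rewrite exprZ_mx mxE /expm_coeff addn0; ring.
Qed.

Lemma cvg_sum_ord n (u : 'I_n -> nat -> R) (l : 'I_n -> R) :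
  (forall k, u k N @[N --> \oo] --> l k) ->
  (fun N => \sum_k u k N) @ \oo --> \sum_k l k.
Proof. by move=> ul; apply: cvg_big => //; exact: add_continuous. Qed.

Lemma lim_pseries_expm_coeff1_l n (M : 'M[R]_n) i j x :
  limn (pseries (expm_coeff M 1 i j) x) = (M *m expm (x *: M)) i j.
Proof.
rewrite mxE; apply: cvg_lim => //.
have -> : pseries (expm_coeff M 1 i j) x =
    (fun N => \sum_l M i l * pseries (expm_coeff M 0 l j) x N).
  apply/funext => N; rewrite /pseries /series /=.
  under [RHS]eq_bigr do rewrite mulr_sumr.
  rewrite [RHS]exchange_big /=; apply: eq_bigr => k _.
  rewrite /expm_coeff addn1 exprS -mulmxE mxE !mulr_suml; apply: eq_bigr => l _.
  by rewrite addn0; ring.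
apply: cvg_sum_ord => l; rewrite expmZ_entry.
by apply: cvgM; [exact: cvg_cst | exact: is_cvg_pseries_expm_coeff].
Qed.

Lemma lim_pseries_expm_coeff1_r n (M : 'M[R]_n) i j x :
  limn (pseries (expm_coeff M 1 i j) x) = (expm (x *: M) *m M) i j.
Proof.
rewrite mxE; apply: cvg_lim => //.
have -> : pseries (expm_coeff M 1 i j) x =
    (fun N => \sum_l pseries (expm_coeff M 0 i l) x N * M l j).
  apply/funext => N; rewrite /pseries /series /=.
  under [RHS]eq_bigr do rewrite mulr_suml.
  rewrite [RHS]exchange_big /=; apply: eq_bigr => k _.
  rewrite /expm_coeff addn1 exprSr -mulmxE mxE !mulr_suml; apply: eq_bigr => l _.
  by rewrite addn0; ring.
apply: cvg_sum_ord => l; rewrite expmZ_entry.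
by apply: cvgM; [exact: is_cvg_pseries_expm_coeff | exact: cvg_cst].
Qed.

Lemma is_derive_expm n (M : 'M[R]_n) i j x :
  is_derive x 1 (fun t => expm (t *: M) i j) ((expm (x *: M) *m M) i j).
Proof.
rewrite -lim_pseries_expm_coeff1_r -pseries_diffs_expm_coeff.
under eq_fun do rewrite expmZ_entry.
apply: (@pseries_snd_diffs _ _ (`|x| + 1)); rewrite ?pseries_diffs_expm_coeff;
  try exact: is_cvg_pseries_expm_coeff.
by rewrite [ltRHS]ger0_norm ?addr_ge0 // ltrDl.
Qed.

Lemma mulmx_expmC n (M : 'M[R]_n) x : M *m expm (x *: M) = expm (x *: M) *m M.
Proof.
by apply/matrixP => i j; rewrite -lim_pseries_expm_coeff1_l lim_pseries_expm_coeff1_r.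
Qed.

Lemma expm0 n (M : 'M[R]_n) : expm (0 *: M) = 1%:M.
Proof.
apply/matrixP => i j; rewrite expmZ_entry.
apply: lim_near_cst => //; near=> N.
have N_gt0 : (0 < N)%N by near: N; exists 1%N.
rewrite /pseries /series /= -(prednK N_gt0) big_nat_recl // big1 ?addr0.
  by rewrite expr0 mulr1 /expm_coeff addn0 expr0 fact0 divr1.
by move=> k _; rewrite expr0n mulr0.
Unshelve. all: by end_near.
Qed.

Lemma trmx_exprmx n (M : 'M[R]_n) k : (M^T) ^+ k = (M ^+ k)^T.
Proof.
elim: k => [|k IH]; first by rewrite !expr0 tr_scalar_mx.
by rewrite exprSr IH exprS -!mulmxE trmx_mul.
Qed.

Lemma expm_tr n (M : 'M[R]_n) t : expm (t *: M^T) = (expm (t *: M))^T.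
Proof.
apply/matrixP => i j; rewrite [RHS]mxE !expmZ_entry.
congr (limn _); apply/funext => N; rewrite /pseries /series /=.
by apply: eq_bigr => k _; rewrite /expm_coeff trmx_exprmx mxE.
Qed.

End MatrixExponential.

Section ScalarCalculus.
Variable R : realType.
Local Notation lebesgue := (@lebesgue_measure R).
Implicit Types (f g F phi : R -> R) (a x s : R).

Lemma is_derive_continuous f x df : is_derive x 1 f df -> {for x, continuous f}.
Proof.
by move=> fx; apply/differentiable_continuous/derivable1_diffP; case: fx.
Qed.

Lemma is_derive_mul f g x df dg : is_derive x 1 f df -> is_derive x 1 g dg ->
  is_derive x 1 (fun t => f t * g t) (df * g x + f x * dg).
Proof.
move=> fx gx; have := is_deriveM fx gx.
by rewrite /GRing.scale /= addrC [g x * _]mulrC.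
Qed.

Lemma is_derive_expRM (c x : R) :
  is_derive x 1 (fun t => expR (c * t)) (c * expR (c * x)).
Proof.
have cx : is_derive x 1 (fun t => c * t) c.
  by have := is_deriveZ c (is_derive_id x 1); rewrite /GRing.scale /= mulr1.
by rewrite mulrC; apply: is_derive1_comp.
Qed.

Lemma Rintegral_FTC_ray a F phi f s : a < 0 -> 0 <= s ->
  (forall x, a < x -> is_derive x 1 F (phi x)) ->
  (forall x, a < x -> {for x, continuous f}) ->
  (forall x, 0 <= x <= s -> f x = phi x) ->
  \int[lebesgue]_(t in `[0, s]) f t = F s - F 0.
Proof.
move=> a0; rewrite le_eqVlt => /predU1P[<- _ _ _|s_gt0 dF cf fphi].
  by rewrite set_itv1 Rintegral_set1 subrr.
rewrite /Rintegral (@continuous_FTC2 _ f F _ _ s_gt0) //=.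
- apply: continuous_in_subspaceT => y; rewrite inE /= in_itv /= => /andP[y0 _].
  by apply: cf; apply: lt_le_trans y0.
- split.
  + move=> y; rewrite in_itv /= => /andP[y0 _].
    by case: (dF y (lt_trans a0 y0)).
  + by apply: cvg_at_right_filter; apply: is_derive_continuous (dF 0 a0).
  + by apply: cvg_at_left_filter; apply: is_derive_continuous (dF s (lt_trans a0 s_gt0)).
- move=> y; rewrite in_itv /= => /andP[y0 ys].
  rewrite derive1E fphi ?(ltW y0) ?(ltW ys) //.
  by case: (dF y (lt_trans a0 y0)).
Qed.

Definition prim a f x : R := \int[lebesgue]_(t in `[a, x]) f t.

Lemma is_derive_prim b a f : b < a -> (forall x, b < x -> {for x, continuous f}) ->
  forall x, a < x -> is_derive x 1 (prim a f) (f x).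
Proof.
move=> ba cf x ax.
have intf : lebesgue.-integrable `[a, x + 1] (EFin \o f).
  apply: continuous_compact_integrable; first exact: segment_compact.
  apply: continuous_in_subspaceT => y; rewrite inE /= in_itv /= => /andP[ay _].
  by apply: cf; apply: lt_le_trans ay.
have x_lt : x < x + 1 by rewrite ltrDl.
have [dprim prim'] := continuous_FTC1_closed x_lt intf ax (cf x (lt_trans ba ax)).
by apply: DeriveDef; rewrite // -derive1E.
Qed.

End ScalarCalculus.

Section MatrixCalculus.
Variable R : realType.
Implicit Types (a b x : R) (f df : R -> R).

(* Derivatives and continuity are required on an open ray ]a, +oo[ with a < 0,
   a neighbourhood of every interval [0, t]; primitives of such functions are
   only differentiable on a smaller ray, hence the bound a varies. *)
Definition derive_gt a f df := forall x, a < x -> is_derive x 1 f (df x).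

Definition mxderive_gt a m n (F F' : R -> 'M[R]_(m, n)) :=
  forall x, a < x -> forall i j, is_derive x 1 (fun t => F t i j) (F' x i j).

Definition mxcont_gt a m n (F : R -> 'M[R]_(m, n)) :=
  forall x, a < x -> forall i j, {for x, continuous (fun t => F t i j)}.

Section Rules.
Variables (a : R) (m n : nat).
Implicit Types (F G : R -> 'M[R]_(m, n)).

Lemma mxderive_gt_cont F F' : mxderive_gt a F F' -> mxcont_gt a F.
Proof. by move=> dF x ax i j; apply: is_derive_continuous (dF x ax i j). Qed.

Lemma mxderive_gtW b F F' : a <= b -> mxderive_gt a F F' -> mxderive_gt b F F'.
Proof. by move=> ab dF x bx; apply: dF; apply: le_lt_trans bx. Qed.

Lemma mxcont_gtW b F : a <= b -> mxcont_gt a F -> mxcont_gt b F.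
Proof. by move=> ab cF x bx; apply: cF; apply: le_lt_trans bx. Qed.

Lemma mxderive_gt_eq F F' G' :
  mxderive_gt a F F' -> (forall x, a < x -> F' x = G' x) -> mxderive_gt a F G'.
Proof. by move=> dF FG x ax i j; rewrite -FG //; apply: dF. Qed.

Lemma mxderive_gt_cst (M : 'M[R]_(m, n)) : mxderive_gt a (fun=> M) (fun=> 0).
Proof. by move=> x _ i j; rewrite mxE; apply: is_derive_cst. Qed.

Lemma mxcont_gt_cst (M : 'M[R]_(m, n)) : mxcont_gt a (fun=> M).
Proof. by move=> x _ i j; apply: cst_continuous. Qed.

Lemma mxderive_gtD F G F' G' : mxderive_gt a F F' -> mxderive_gt a G G' ->
  mxderive_gt a (fun t => F t + G t) (fun t => F' t + G' t).
Proof.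
move=> dF dG x ax i j; under eq_fun do rewrite mxE.
by rewrite mxE; apply: is_deriveD; [apply: dF | apply: dG].
Qed.

Lemma mxcont_gtD F G : mxcont_gt a F -> mxcont_gt a G ->
  mxcont_gt a (fun t => F t + G t).
Proof.
move=> cF cG x ax i j.
have -> : (fun t => (F t + G t) i j) = (fun t => F t i j + G t i j).
  by apply/funext => t; rewrite mxE.
by apply: continuousD; [apply: cF | apply: cG].
Qed.

Lemma mxderive_gtN F F' : mxderive_gt a F F' ->
  mxderive_gt a (fun t => - F t) (fun t => - F' t).
Proof.
by move=> dF x ax i j; under eq_fun do rewrite mxE; rewrite mxE; apply/is_deriveN/dF.
Qed.

Lemma mxderive_gtZ f df F F' : derive_gt a f df -> mxderive_gt a F F' ->
  mxderive_gt a (fun t => f t *: F t) (fun t => df t *: F t + f t *: F' t).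
Proof.
move=> dfa dF x ax i j; under eq_fun do rewrite mxE.
by rewrite !mxE; apply: is_derive_mul; [apply: dfa | apply: dF].
Qed.

Lemma mxcont_gtZ f df F : derive_gt a f df -> mxcont_gt a F ->
  mxcont_gt a (fun t => f t *: F t).
Proof.
move=> dfa cF x ax i j.
have -> : (fun t => (f t *: F t) i j) = (fun t => f t * F t i j).
  by apply/funext => t; rewrite mxE.
by apply: continuousM; [apply: is_derive_continuous (dfa x ax) | apply: cF].
Qed.

Lemma mxderive_gtZr k F F' : mxderive_gt a F F' ->
  mxderive_gt a (fun t => k *: F t) (fun t => k *: F' t).
Proof.
move=> dF; apply: mxderive_gt_eq (mxderive_gtZ (df := fun=> 0) _ dF) _.
  by move=> x _; apply: is_derive_cst.
by move=> x _; rewrite scale0r add0r.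
Qed.

End Rules.

Lemma mxderive_gtM a m n p (F F' : R -> 'M[R]_(m, n)) (G G' : R -> 'M[R]_(n, p)) :
  mxderive_gt a F F' -> mxderive_gt a G G' ->
  mxderive_gt a (fun t => F t *m G t) (fun t => F' t *m G t + F t *m G' t).
Proof.
move=> dF dG x ax i j; under eq_fun do rewrite mxE.
rewrite !mxE -big_split /=.
have -> : (fun t => \sum_k F t i k * G t k j) = \sum_k (fun t => F t i k * G t k j).
  by rewrite fct_sumE.
apply: is_derive_sum => k.
by apply: is_derive_mul; [apply: dF | apply: dG].
Qed.

Lemma mxcont_gtM a m n p (F : R -> 'M[R]_(m, n)) (G : R -> 'M[R]_(n, p)) :
  mxcont_gt a F -> mxcont_gt a G -> mxcont_gt a (fun t => F t *m G t).
Proof.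
move=> cF cG x ax i j.
have -> : (fun t => (F t *m G t) i j) = (fun t => \sum_k F t i k * G t k j).
  by apply/funext => t; rewrite mxE.
apply: cvg_big => [|k _]; first exact: add_continuous.
by apply: continuousM; [apply: cF | apply: cG].
Qed.

Lemma mxderive_gt_tr a m n (F F' : R -> 'M[R]_(m, n)) : mxderive_gt a F F' ->
  mxderive_gt a (fun t => (F t)^T) (fun t => (F' t)^T).
Proof. by move=> dF x ax i j; under eq_fun do rewrite mxE; rewrite mxE; apply: dF. Qed.

Lemma mxcont_gt_tr a m n (F : R -> 'M[R]_(m, n)) :
  mxcont_gt a F -> mxcont_gt a (fun t => (F t)^T).
Proof.
move=> cF x ax i j.
have -> : (fun t => (F t)^T i j) = (fun t => F t j i) by apply/funext => t; rewrite mxE.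
exact: cF.
Qed.

Lemma mxderive_gt_row a m n1 n2 (F F' : R -> 'M[R]_(m, n1)) (G G' : R -> 'M[R]_(m, n2)) :
  mxderive_gt a F F' -> mxderive_gt a G G' ->
  mxderive_gt a (fun t => row_mx (F t) (G t)) (fun t => row_mx (F' t) (G' t)).
Proof.
move=> dF dG x ax i j; under eq_fun do rewrite mxE.
by rewrite mxE; case: (fintype.split j) => k; [apply: dF | apply: dG].
Qed.

Lemma mxderive_gt_col a m1 m2 n (F F' : R -> 'M[R]_(m1, n)) (G G' : R -> 'M[R]_(m2, n)) :
  mxderive_gt a F F' -> mxderive_gt a G G' ->
  mxderive_gt a (fun t => col_mx (F t) (G t)) (fun t => col_mx (F' t) (G' t)).
Proof.
move=> dF dG x ax i j; under eq_fun do rewrite mxE.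
by rewrite mxE; case: (fintype.split i) => k; [apply: dF | apply: dG].
Qed.

Lemma mxderive_gt_block a m1 m2 n1 n2
    (F1 F1' : R -> 'M[R]_(m1, n1)) (F2 F2' : R -> 'M[R]_(m1, n2))
    (F3 F3' : R -> 'M[R]_(m2, n1)) (F4 F4' : R -> 'M[R]_(m2, n2)) :
  mxderive_gt a F1 F1' -> mxderive_gt a F2 F2' ->
  mxderive_gt a F3 F3' -> mxderive_gt a F4 F4' ->
  mxderive_gt a (fun t => block_mx (F1 t) (F2 t) (F3 t) (F4 t))
                (fun t => block_mx (F1' t) (F2' t) (F3' t) (F4' t)).
Proof.
by move=> d1 d2 d3 d4; apply: mxderive_gt_col; apply: mxderive_gt_row.
Qed.

Lemma mxderive_gt_scalar a n f df : derive_gt a f df ->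
  mxderive_gt a (fun t => (f t)%:M : 'M[R]_n) (fun t => (df t)%:M).
Proof.
move=> dfa x ax i j.
have -> : (fun t => ((f t)%:M : 'M[R]_n) i j) = (fun t => f t * (i == j)%:R).
  by apply/funext => t; rewrite mxE mulr_natr.
rewrite mxE -[df x *+ _]mulr_natr.
have := is_derive_mul (dfa x ax) (is_derive_cst ((i == j)%:R : R) x 1).
by rewrite mulr0 addr0.
Qed.

Lemma derive_gt_expRM a (c : R) :
  derive_gt a (fun t => expR (c * t)) (fun t => c * expR (c * t)).
Proof. by move=> x _; apply: is_derive_expRM. Qed.

Lemma mxderive_gt_expm a n (M : 'M[R]_n) :
  mxderive_gt a (fun t => expm (t *: M)) (fun t => expm (t *: M) *m M).
Proof. by move=> x _ i j; apply: is_derive_expm. Qed.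

Lemma mxcont_gt_expm a n (M : 'M[R]_n) : mxcont_gt a (fun t => expm (t *: M)).
Proof. exact/mxderive_gt_cont/mxderive_gt_expm. Qed.

End MatrixCalculus.

Section MatrixIntegral.
Variable R : realType.

Definition mxprim (a : R) m n (F : R -> 'M[R]_(m, n)) (t : R) : 'M[R]_(m, n) :=
  \matrix_(i, j) (prim a (fun s => F s i j) t - prim a (fun s => F s i j) 0).

Lemma mxprim0 a m n (F : R -> 'M[R]_(m, n)) : mxprim a F 0 = 0.
Proof. by apply/matrixP => i j; rewrite !mxE subrr. Qed.

Lemma mxderive_gt_mxprim b a m n (F : R -> 'M[R]_(m, n)) : b < a ->
  mxcont_gt b F -> mxderive_gt a (mxprim a F) F.
Proof.
move=> ba cF x ax i j; under eq_fun do rewrite mxE.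
have dprim := is_derive_prim ba (fun y by_ => cF y by_ i j) ax.
by have := is_deriveD dprim (is_derive_cst (- prim a (fun s => F s i j) 0) x 1); rewrite addr0.
Qed.

Lemma mxint_FTC a m n (Phi phi f : R -> 'M[R]_(m, n)) s :
  a < 0 -> 0 <= s -> mxderive_gt a Phi phi -> mxcont_gt a f ->
  (forall t, 0 <= t <= s -> f t = phi t) ->
  mxint `[0, s] f = Phi s - Phi 0.
Proof.
move=> a0 s0 dPhi cf fphi; apply/matrixP => i j; rewrite !mxE.
apply: (Rintegral_FTC_ray (F := fun t => Phi t i j) (phi := fun t => phi t i j)
  (f := fun t => f t i j) a0 s0).
- by move=> x ax; exact: dPhi.
- by move=> x ax; exact: cf.
- by move=> x xs; rewrite fphi.
Qed.

Lemma mxint_mxprim b a m n (F : R -> 'M[R]_(m, n)) t :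
  b < a -> a < 0 -> mxcont_gt b F -> 0 <= t -> mxint `[0, t] F = mxprim a F t.
Proof.
move=> ba a0 cF t0; rewrite (@mxint_FTC a _ _ (mxprim a F) F) ?mxprim0 ?subr0 //.
- exact: mxderive_gt_mxprim ba cF.
- exact: mxcont_gtW (ltW ba) cF.
Qed.

Lemma mxint_tr (D : set R) m n (F : R -> 'M[R]_(m, n)) :
  mxint D (fun t => (F t)^T) = (mxint D F)^T.
Proof. by apply/matrixP => i j; rewrite !mxE; apply: eq_Rintegral => t _; rewrite mxE. Qed.

Lemma eq_mxint_itv s m n (F G : R -> 'M[R]_(m, n)) :
  (forall t, 0 <= t <= s -> F t = G t) -> mxint `[0, s] F = mxint `[0, s] G.
Proof.
move=> FG; apply/matrixP => i j; rewrite !mxE.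
by apply: eq_Rintegral => t; rewrite inE /= in_itv /= => /FG ->.
Qed.

End MatrixIntegral.

Section ExpmUniqueness.
Variable R : realType.

Lemma mxderive_gt0_const (a : R) m n (Z : R -> 'M[R]_(m, n)) : a < 0 ->
  mxderive_gt a Z (fun=> 0) -> forall t, a < t -> Z t = Z 0.
Proof.
move=> a0 dZ t at_; apply/matrixP => i j.
have Zeq u v : a < u -> u <= v -> Z v i j = Z u i j.
  move=> au uv.
  have dZij x : x \in `]u, v[ -> is_derive x 1 (fun t => Z t i j) ((fun=> 0) x).
    rewrite in_itv /= => /andP[ux _].
    by have := dZ x (lt_trans au ux) i j; rewrite mxE.
  have cZij : {within `[u, v], continuous (fun t => Z t i j)}.
    apply: continuous_in_subspaceT => y; rewrite inE /= in_itv /= => /andP[uy _].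
    exact: (mxderive_gt_cont dZ) y (lt_le_trans au uy) i j.
  have [c _] := MVT_segment uv dZij cZij.
  by rewrite mul0r => /eqP; rewrite subr_eq0 => /eqP.
by case: (leP 0 t) => [t0|t0]; [apply: Zeq | symmetry; apply: Zeq (ltW t0)].
Qed.

(* exp(tM) is the unique solution of X' = X M, X 0 = 1: both X(t) and exp(tM)
   are inverted on the right by exp(-tM), since X(t) exp(-tM) has derivative 0. *)
Lemma expm_unique (a : R) n (M : 'M[R]_n) (X : R -> 'M[R]_n) : a < 0 ->
  mxderive_gt a X (fun t => X t *m M) -> X 0 = 1%:M ->
  forall t, a < t -> X t = expm (t *: M).
Proof.
move=> a0 dX X0.
have rinv (Y : R -> 'M[R]_n) : mxderive_gt a Y (fun t => Y t *m M) -> Y 0 = 1%:M ->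
    forall t, a < t -> Y t *m expm (t *: - M) = 1%:M.
  move=> dY Y0 t at_.
  have dZ : mxderive_gt a (fun t => Y t *m expm (t *: - M)) (fun=> 0).
    apply: mxderive_gt_eq (mxderive_gtM dY (mxderive_gt_expm (a := a) (- M))) _ => x _.
    by rewrite -mulmx_expmC mulmxA mulmxN mulNmx addrN.
  by rewrite (mxderive_gt0_const a0 dZ at_) Y0 mul1mx expm0.
move=> t at_.
have linv : expm (t *: - M) *m expm (t *: M) = 1%:M.
  by apply: mulmx1C; exact: rinv (mxderive_gt_expm M) (expm0 M) t at_.
by rewrite -[X t]mulmx1 -linv mulmxA (rinv X dX X0 t at_) mul1mx.
Qed.

Lemma expm_subr_scalar n (M : 'M[R]_n) (c t : R) :
  expm (t *: (M - c%:M)) = expR (- c * t) *: expm (t *: M).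
Proof.
set a := - (`|t| + 1).
have a0 : a < 0 by rewrite oppr_lt0 ltr_pwDr.
have at_ : a < t by have := ler_norm (- t); rewrite normrN /a; lra.
symmetry; apply: (expm_unique (X := fun t => expR (- c * t) *: expm (t *: M)) a0 _ _ at_).
- apply: mxderive_gt_eq (mxderive_gtZ (derive_gt_expRM (a := a) (- c)) (mxderive_gt_expm M)) _.
  move=> x _; rewrite -scalemxAl mulmxBr mul_mx_scalar scalerBr scalerA.
  by apply/matrixP => i j; rewrite !mxE; ring.
- by rewrite mulr0 expR0 scale1r expm0.
Qed.

End ExpmUniqueness.

Section LagExpectation.
Variable R : realType.
Local Notation lebesgue := (@lebesgue_measure R).

Lemma lagE_mxint (a k dt : R) m n (F G : R -> 'M[R]_(m, n)) :
  a < 0 -> 0 < dt -> mxcont_gt a G -> (forall t, 0 <= t <= dt -> F t = G t) ->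
  lagE k dt F = mxint `[0, dt] (fun t => (lag_const k dt * expR (- k * t)) *: G t).
Proof.
move=> a0 dt0 cG FG; rewrite /lagE; apply/matrixP => i j; rewrite !mxE.
pose h t := lag_const k dt * expR (- k * t) * G t i j.
transitivity (\int[lebesgue]_(t in setT) ((h \_ `[0, dt[) t)).
  apply: eq_Rintegral => t _; rewrite mxE patchE /lag_density.
  rewrite (_ : (t \in `[0, dt[%classic) = (0 <= t) && (t < dt)); last first.
    by apply/idP/idP; rewrite inE /= in_itv.
  case: ifP => [/andP[t0 tdt]|_]; last by rewrite mul0r.
  by rewrite /h FG // t0 ltW.
rewrite -Rintegral_mkcond Rintegral_itv_bndo_bndc; last first.
  apply: (@integrableS _ _ _ lebesgue `[0, dt]) => //.
    by apply: subset_itvl; rewrite bnd_simp.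
  apply: continuous_compact_integrable; first exact: segment_compact.
  apply: continuous_in_subspaceT => y; rewrite inE /= in_itv /= => /andP[y0 _].
  have cexp := is_derive_continuous (is_derive_expRM (- k) y).
  apply: (continuousM (s := fun t => lag_const k dt * expR (- k * t))).
    by apply: continuousM; [exact: cst_continuous | exact: cexp].
  exact: cG y (lt_le_trans a0 y0) i j.
by apply: eq_Rintegral => t _; rewrite /h mxE.
Qed.

End LagExpectation.

Section BirthMoments.
Variable R : realType.
Variables (nx nb : nat) (A : 'M[R]_nx) (u xa : 'cV[R]_nx) (L : 'M[R]_(nx, nb))
  (Q : 'M[R]_nb) (Pa : 'M[R]_nx) (mu dt : R).
Hypotheses (mu_gt0 : 0 < mu) (dt_gt0 : 0 < dt).

Local Notation ex t := (expR (- mu * t)).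
Local Notation c := (lag_const mu dt).
Local Notation d := (1 / (1 - ex dt)).

Lemma one_sub_expR_neq0 : 1 - ex dt != 0.
Proof.
rewrite subr_eq0 eq_sym lt_eqF // expR_lt1 mulNr oppr_lt0.
exact: mulr_gt0.
Qed.

Lemma lagE_FTC m n (F G Phi : R -> 'M[R]_(m, n)) :
  mxcont_gt (-1/2) G -> (forall t, 0 <= t <= dt -> F t = G t) ->
  mxderive_gt (-1/2) Phi (fun t => (c * ex t) *: G t) ->
  lagE mu dt F = Phi dt - Phi 0.
Proof.
move=> cG FG dPhi; have a0 : (-1/2 : R) < 0 by lra.
rewrite (@lagE_mxint _ (-1/2) mu dt _ _ F G a0 dt_gt0 cG FG).
apply: (mxint_FTC a0 (ltW dt_gt0) dPhi) => //.
apply: (mxcont_gtZ (df := fun t => c * (- mu * ex t))) cG => x _.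
by have := is_derive_mul (is_derive_cst c x 1) (is_derive_expRM (- mu) x); rewrite mul0r add0r.
Qed.

Definition intexpA t := mxprim (-1) (fun s => expm (s *: A)) t.

Lemma mxderive_gt_intexpA : mxderive_gt (-1) intexpA (fun t => expm (t *: A)).
Proof. by apply: (mxderive_gt_mxprim (b := -2)); [lra | exact: mxcont_gt_expm]. Qed.

Lemma mxcont_gt_intexpA a : -1 <= a -> mxcont_gt a intexpA.
Proof. by move=> a1; apply: (mxcont_gtW a1); apply: mxderive_gt_cont mxderive_gt_intexpA. Qed.

Lemma mxint_expm t : 0 <= t -> mxint `[0, t] (fun s => expm (s *: A)) = intexpA t.
Proof. by move=> t0; apply: (mxint_mxprim (b := -2)) => //; [lra | exact: mxcont_gt_expm]. Qed.

Lemma mxint_expm_tr t : 0 <= t ->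
  mxint `[0, t] (fun s => expm (s *: A^T)) = (intexpA t)^T.
Proof.
move=> t0; rewrite -mxint_expm // -mxint_tr.
by congr mxint; apply/funext => s; exact: expm_tr.
Qed.

Definition mean_form t := expm (t *: A) *m xa + intexpA t *m u.

Lemma mean_tE t : 0 <= t -> mean_t A u xa t = mean_form t.
Proof. by move=> t0; rewrite /mean_t mxint_expm. Qed.

Lemma mxcont_gt_mean_form : mxcont_gt (-1/2) mean_form.
Proof.
apply: mxcont_gtD; apply: mxcont_gtM; try exact: mxcont_gt_cst.
  exact: mxcont_gt_expm.
by apply: mxcont_gt_intexpA; lra.
Qed.

Definition Ix t := mxprim (-1) (fun s => expm (s *: (A - mu%:M)) *m xa) t.
Definition Iu t := mxprim (-1/2) (fun s => ex s *: (intexpA s *m u)) t.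

Lemma mxderive_gt_Ix : mxderive_gt (-1) Ix (fun s => expm (s *: (A - mu%:M)) *m xa).
Proof.
apply: (mxderive_gt_mxprim (b := -2)); first lra.
by apply: mxcont_gtM; [exact: mxcont_gt_expm | exact: mxcont_gt_cst].
Qed.

Lemma mxderive_gt_Iu : mxderive_gt (-1/2) Iu (fun s => ex s *: (intexpA s *m u)).
Proof.
apply: (mxderive_gt_mxprim (b := -1)); first lra.
apply: mxcont_gtZ; first exact: derive_gt_expRM.
by apply: mxcont_gtM; [exact: mxcont_gt_intexpA | exact: mxcont_gt_cst].
Qed.

Lemma birth_meanE : birth_mean A u xa mu dt = c *: (Ix dt + Iu dt).
Proof.
rewrite /birth_mean (lagE_FTC (G := mean_form) (Phi := fun t => c *: (Ix t + Iu t))).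
- by rewrite /Ix /Iu !mxprim0 addr0 scaler0 subr0.
- exact: mxcont_gt_mean_form.
- by move=> t /andP[t0 _]; exact: mean_tE.
apply: mxderive_gt_eq (mxderive_gtZr _ (mxderive_gtD _ mxderive_gt_Iu)) _.
  by apply: (mxderive_gtW _ mxderive_gt_Ix); lra.
by move=> t _ /=; rewrite /mean_form expm_subr_scalar -scalemxAl -scalerDr scalerA.
Qed.

Lemma expm_Ab_corner :
  row_mx (1%:M : 'M[R]_nx) (0 : 'M[R]_(nx, 1)) *m
    expm (dt *: (block_mx (A - mu%:M) xa 0 0 : 'M[R]_(nx + 1)))
    *m col_mx (0 : 'M[R]_(nx, 1)) (1 : 'M[R]_1) = Ix dt.
Proof.
set Ab : 'M[R]_(nx + 1) := block_mx _ _ _ _.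
pose X t := block_mx (expm (t *: (A - mu%:M))) (Ix t) 0 (1%:M : 'M[R]_1).
have expm_Ab : forall t, -1 < t -> X t = expm (t *: Ab).
  apply: expm_unique; first lra.
  - apply: mxderive_gt_eq (mxderive_gt_block (mxderive_gt_expm _) mxderive_gt_Ix
      (mxderive_gt_cst 0) (mxderive_gt_cst 1%:M)) _ => x _.
    by rewrite /X /Ab mulmx_block !mulmx0 !mul0mx !addr0.
  - by rewrite /X expm0 /Ix mxprim0 -scalar_mx_block.
rewrite -expm_Ab /X; last by apply: lt_trans dt_gt0; rewrite ltrN10.
by rewrite mul_row_block !mul1mx !mul0mx !addr0 mul_row_col mulmx0 add0r mulmx1.
Qed.

Lemma is_derive_one_sub_expR_div (x : R) :
  is_derive x 1 (fun t => (1 - ex t) / mu) (ex x).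
Proof.
have mu_neq0 : mu != 0 by rewrite gt_eqF.
have d1 := is_deriveB (is_derive_cst (1 : R) x 1) (is_derive_expRM (- mu) x).
apply: is_derive_eq (is_derive_mul d1 (is_derive_cst (mu^-1 : R) x 1)) _.
by rewrite /=; field.
Qed.

Lemma expm_Abu_corner :
  row_mx (1%:M : 'M[R]_nx) (0 : 'M[R]_(nx, 1 + 1)) *m
    expm (dt *: (block_mx (A - mu%:M) (row_mx u 0) 0
             (block_mx ((- mu)%:M : 'M[R]_1) 1 0 0) : 'M[R]_(nx + (1 + 1))))
    *m col_mx (0 : 'M[R]_(nx, 1)) (col_mx (0 : 'M[R]_1) (1 : 'M[R]_1)) = Iu dt.
Proof.
set Abu : 'M[R]_(nx + (1 + 1)) := block_mx _ _ _ _.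
pose P t := ex t *: (intexpA t *m u).
pose X t : 'M[R]_(nx + (1 + 1)) := block_mx (expm (t *: (A - mu%:M))) (row_mx (P t) (Iu t))
  0 (block_mx ((ex t)%:M : 'M[R]_1) (((1 - ex t) / mu)%:M) 0 1%:M).
have dP : mxderive_gt (-1/2) P
    (fun t => (- mu * ex t) *: (intexpA t *m u) + ex t *: (expm (t *: A) *m u + intexpA t *m 0)).
  apply: mxderive_gtZ; first exact: derive_gt_expRM.
  apply: mxderive_gtM (mxderive_gt_cst _).
  by apply: (mxderive_gtW _ mxderive_gt_intexpA); lra.
have expm_Abu : forall t, -1/2 < t -> X t = expm (t *: Abu).
  apply: expm_unique; first lra.
  - apply: mxderive_gt_eq (mxderive_gt_block (mxderive_gt_expm _)
      (mxderive_gt_row dP mxderive_gt_Iu) (mxderive_gt_cst 0)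
      (mxderive_gt_block (mxderive_gt_scalar (derive_gt_expRM (- mu)))
         (mxderive_gt_scalar (fun x _ => is_derive_one_sub_expR_div x))
         (mxderive_gt_cst 0) (mxderive_gt_cst 1%:M))) _.
    move=> x _; rewrite /X /Abu mulmx_block; congr block_mx.
    + by rewrite mulmx0 addr0.
    + rewrite mul_mx_row mul_row_block !mulmx0 !addr0 add_row_mx add0r mulmx1.
      congr row_mx.
      by rewrite /P expm_subr_scalar mul_mx_scalar -scalemxAl scalerA addrC.
    + by rewrite mul0mx mulmx0 addr0.
    + rewrite mul0mx add0r mulmx_block; congr block_mx.
      * by rewrite mulmx0 addr0 -scalar_mxM mulrC.
      * by rewrite mulmx1 mulmx0 addr0.
      * by rewrite mul0mx mulmx0 addr0.
      * by rewrite mul0mx mulmx0 addr0.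
  - rewrite /X expm0 /P /Iu /intexpA !mxprim0 mul0mx scaler0 row_mx0.
    by rewrite mulr0 expR0 subrr mul0r raddf0 -!scalar_mx_block.
rewrite -expm_Abu /X; last by apply: lt_trans dt_gt0; lra.
rewrite mul_row_block !mul1mx !mul0mx !addr0 mul_row_col mulmx0 add0r.
by rewrite mul_row_col mulmx0 add0r mulmx1.
Qed.

Definition Cb := L *m Q *m L^T + mu *: Pa.
Definition diffusion t := expm (t *: A) *m L *m Q *m L^T *m expm (t *: A^T).
Definition wdiff t := ex t *: (expm (t *: A) *m Cb *m expm (t *: A^T)).
Definition Idiff t := mxprim (-1) diffusion t.
Definition Iwdiff t := mxprim (-1) wdiff t.
Definition cov_form t := expm (t *: A) *m Pa *m expm (t *: A^T) + Idiff t.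

Lemma mxcont_gt_diffusion a : mxcont_gt a diffusion.
Proof.
apply: mxcont_gtM; last exact: mxcont_gt_expm.
by do 3 (apply: mxcont_gtM; last exact: mxcont_gt_cst); exact: mxcont_gt_expm.
Qed.

Lemma mxcont_gt_wdiff a : mxcont_gt a wdiff.
Proof.
apply: mxcont_gtZ; first exact: derive_gt_expRM.
apply: mxcont_gtM; last exact: mxcont_gt_expm.
by apply: mxcont_gtM; [exact: mxcont_gt_expm | exact: mxcont_gt_cst].
Qed.

Lemma mxderive_gt_Idiff : mxderive_gt (-1) Idiff diffusion.
Proof. by apply: (mxderive_gt_mxprim (b := -2)); [lra | exact: mxcont_gt_diffusion]. Qed.

Lemma mxderive_gt_Iwdiff : mxderive_gt (-1) Iwdiff wdiff.
Proof. by apply: (mxderive_gt_mxprim (b := -2)); [lra | exact: mxcont_gt_wdiff]. Qed.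

Lemma mxint_diffusion t : 0 <= t -> mxint `[0, t] diffusion = Idiff t.
Proof.
by move=> t0; apply: (mxint_mxprim (b := -2)) => //; [lra | exact: mxcont_gt_diffusion].
Qed.

Lemma mxint_wdiff t : 0 <= t -> mxint `[0, t] wdiff = Iwdiff t.
Proof.
by move=> t0; apply: (mxint_mxprim (b := -2)) => //; [lra | exact: mxcont_gt_wdiff].
Qed.

Lemma cov_tE t : 0 <= t -> cov_t A L Q Pa t = cov_form t.
Proof. by move=> t0; rewrite /cov_form -mxint_diffusion. Qed.

Lemma mxcont_gt_cov_form : mxcont_gt (-1/2) cov_form.
Proof.
apply: mxcont_gtD.
  apply: mxcont_gtM; last exact: mxcont_gt_expm.
  by apply: mxcont_gtM; [exact: mxcont_gt_expm | exact: mxcont_gt_cst].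
by apply: mxderive_gt_cont (mxderive_gtW _ mxderive_gt_Idiff); lra.
Qed.

(* Integration by parts: (- e^{-mu t} Idiff t)' = mu e^{-mu t} Idiff t - e^{-mu t} diffusion t;
   the leftover e^{-mu t} diffusion t and the weighted initial term
   mu e^{-mu t} exp(tA) Pa exp(tA^T) together make up wdiff, whence Cb. *)
Definition cov_prim t := d *: (- (ex t *: Idiff t) + Iwdiff t).

Lemma mxderive_gt_cov_prim :
  mxderive_gt (-1/2) cov_prim (fun t => (c * ex t) *: cov_form t).
Proof.
apply: mxderive_gt_eq (mxderive_gtZr _ (mxderive_gtD (mxderive_gtN
  (mxderive_gtZ (derive_gt_expRM (- mu)) (mxderive_gtW _ mxderive_gt_Idiff)))
  (mxderive_gtW _ mxderive_gt_Iwdiff))) _; try lra.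
move=> t _; rewrite /cov_form /wdiff /diffusion /Cb /lag_const.
rewrite mulmxDr mulmxDl -scalemxAr -scalemxAl !mulmxA.
move: (expm (t *: A) *m Pa *m expm (t *: A^T)) (Idiff t)
  (expm (t *: A) *m L *m Q *m L^T *m expm (t *: A^T)) => X Y Z.
have := one_sub_expR_neq0; move: (1 - ex dt) => D D0.
by apply/matrixP => i j; rewrite !mxE; field.
Qed.

Lemma cov_prim0 : cov_prim 0 = 0.
Proof. by rewrite /cov_prim /Idiff /Iwdiff !mxprim0 scaler0 oppr0 add0r scaler0. Qed.

Lemma lagE_cov_t : lagE mu dt (cov_t A L Q Pa) =
  - ((ex dt / (1 - ex dt)) *: mxint `[0, dt] diffusion) +
  d *: mxint `[0, dt] (fun t => expm (t *: (A - (mu / 2)%:M)) *m Cb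
                                  *m expm (t *: (A - (mu / 2)%:M)^T)).
Proof.
rewrite (lagE_FTC mxcont_gt_cov_form _ mxderive_gt_cov_prim); last first.
  by move=> t /andP[t0 _]; exact: cov_tE.
rewrite cov_prim0 subr0 /cov_prim mxint_diffusion ?(ltW dt_gt0) //.
rewrite (eq_mxint_itv (G := wdiff)); last first.
  move=> t _; rewrite [(A - _)^T]raddfB /= tr_scalar_mx !expm_subr_scalar /wdiff.
  rewrite -scalemxAl -scalemxAr -scalemxAl scalerA -expRD.
  by congr (expR _ *: _); field.
rewrite mxint_wdiff ?(ltW dt_gt0) // scalerDr scalerN scalerA.
by rewrite mulrC mul1r.
Qed.

Definition mean_outer t := mean_form t *m (mean_form t)^T.
Definition wxx t := ex t *: (expm (t *: A) *m xa *m xa^T *m expm (t *: A^T)).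
Definition wxu t := ex t *: (expm (t *: A) *m xa *m (intexpA t *m u)^T).
Definition wuu t := ex t *: (expm (t *: A) *m u *m (intexpA t *m u)^T).
Definition Ixx t := mxprim (-1) wxx t.
Definition Ixu t := mxprim (-1/2) wxu t.
Definition Iuu t := mxprim (-1/2) wuu t.
Definition Huu t := intexpA t *m u *m (intexpA t *m u)^T.

Lemma mxcont_gt_wxx a : mxcont_gt a wxx.
Proof.
apply: mxcont_gtZ; first exact: derive_gt_expRM.
apply: mxcont_gtM; last exact: mxcont_gt_expm.
by do 2 (apply: mxcont_gtM; last exact: mxcont_gt_cst); exact: mxcont_gt_expm.
Qed.

Lemma mxcont_gt_intexpA_u_tr : mxcont_gt (-1) (fun t => (intexpA t *m u)^T).
Proof.
apply/mxcont_gt_tr/mxcont_gtM; last exact: mxcont_gt_cst.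
exact: mxcont_gt_intexpA.
Qed.

Lemma mxcont_gt_wxu : mxcont_gt (-1) wxu.
Proof.
apply: mxcont_gtZ; first exact: derive_gt_expRM.
apply: mxcont_gtM; last exact: mxcont_gt_intexpA_u_tr.
by apply: mxcont_gtM; [exact: mxcont_gt_expm | exact: mxcont_gt_cst].
Qed.

Lemma mxcont_gt_wuu : mxcont_gt (-1) wuu.
Proof.
apply: mxcont_gtZ; first exact: derive_gt_expRM.
apply: mxcont_gtM; last exact: mxcont_gt_intexpA_u_tr.
by apply: mxcont_gtM; [exact: mxcont_gt_expm | exact: mxcont_gt_cst].
Qed.

Lemma mxderive_gt_Ixx : mxderive_gt (-1/2) Ixx wxx.
Proof.
apply: (mxderive_gtW (a := -1)); first lra.
by apply: (mxderive_gt_mxprim (b := -2)); [lra | exact: mxcont_gt_wxx].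
Qed.

Lemma mxderive_gt_Ixu : mxderive_gt (-1/2) Ixu wxu.
Proof. by apply: (mxderive_gt_mxprim (b := -1)); [lra | exact: mxcont_gt_wxu]. Qed.

Lemma mxderive_gt_Iuu : mxderive_gt (-1/2) Iuu wuu.
Proof. by apply: (mxderive_gt_mxprim (b := -1)); [lra | exact: mxcont_gt_wuu]. Qed.

Lemma mxderive_gt_Huu : mxderive_gt (-1/2) Huu (fun t =>
  (expm (t *: A) *m u + intexpA t *m 0) *m (intexpA t *m u)^T +
  intexpA t *m u *m (expm (t *: A) *m u + intexpA t *m 0)^T).
Proof.
have dIu : mxderive_gt (-1/2) (fun t => intexpA t *m u)
    (fun t => expm (t *: A) *m u + intexpA t *m 0).
  apply: mxderive_gtM (mxderive_gt_cst _).
  by apply: (mxderive_gtW _ mxderive_gt_intexpA); lra.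
exact: mxderive_gtM dIu (mxderive_gt_tr dIu).
Qed.

Definition mean_outer_prim t := c *: Ixx t + c *: Ixu t + c *: (Ixu t)^T +
  d *: (- (ex t *: Huu t) + Iuu t + (Iuu t)^T).

Lemma mxderive_gt_mean_outer_prim :
  mxderive_gt (-1/2) mean_outer_prim (fun t => (c * ex t) *: mean_outer t).
Proof.
apply: mxderive_gt_eq (mxderive_gtD (mxderive_gtD (mxderive_gtD
    (mxderive_gtZr _ mxderive_gt_Ixx) (mxderive_gtZr _ mxderive_gt_Ixu))
    (mxderive_gtZr _ (mxderive_gt_tr mxderive_gt_Ixu)))
  (mxderive_gtZr _ (mxderive_gtD (mxderive_gtD
    (mxderive_gtN (mxderive_gtZ (derive_gt_expRM (- mu)) mxderive_gt_Huu))
    mxderive_gt_Iuu) (mxderive_gt_tr mxderive_gt_Iuu)))) _.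
move=> t _; have trZM m (k : R) (X Y : 'M[R]_(nx, m)) : (k *: (X *m Y^T))^T = k *: (Y *m X^T).
  by rewrite linearZ /= trmx_mul trmxK.
rewrite /mean_outer /mean_form /wxx /wxu /wuu /Huu /lag_const !trZM expm_tr.
rewrite -[expm (t *: A) *m xa *m xa^T *m _]mulmxA -trmx_mul !mulmx0 !addr0.
move: (expm (t *: A) *m xa) (intexpA t *m u) (expm (t *: A) *m u) => P V W.
rewrite [(P + V)^T]raddfD /= !mulmxDl !mulmxDr.
move: (P *m P^T) (P *m V^T) (V *m P^T) (V *m V^T) (W *m V^T) (V *m W^T) => X1 X2 X3 X4 X5 X6.
have := one_sub_expR_neq0; move: (1 - ex dt) => D D0.
by apply/matrixP => i j; rewrite !mxE; field.
Qed.

Lemma mean_outer_prim0 : mean_outer_prim 0 = 0.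
Proof.
rewrite /mean_outer_prim /Ixx /Ixu /Iuu /Huu /intexpA !mxprim0 !mul0mx trmx0.
by rewrite !scaler0 oppr0 !addr0 scaler0 addr0.
Qed.

Lemma mxint_wxx t : 0 <= t -> mxint `[0, t] wxx = Ixx t.
Proof. by move=> t0; apply: (mxint_mxprim (b := -2)) => //; [lra | exact: mxcont_gt_wxx]. Qed.

Lemma mxint_wxu t : 0 <= t -> mxint `[0, t] wxu = Ixu t.
Proof. by move=> t0; apply: (mxint_mxprim (b := -1)) => //; [lra | exact: mxcont_gt_wxu]. Qed.

Lemma mxint_wuu t : 0 <= t -> mxint `[0, t] wuu = Iuu t.
Proof. by move=> t0; apply: (mxint_mxprim (b := -1)) => //; [lra | exact: mxcont_gt_wuu]. Qed.

Lemma mxcont_gt_mean_outer : mxcont_gt (-1/2) mean_outer.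
Proof. exact/mxcont_gtM/mxcont_gt_tr/mxcont_gt_mean_form/mxcont_gt_mean_form. Qed.

Lemma lagE_mean_outer_prim :
  lagE mu dt (fun t => mean_t A u xa t *m (mean_t A u xa t)^T) = mean_outer_prim dt.
Proof.
rewrite (lagE_FTC mxcont_gt_mean_outer _ mxderive_gt_mean_outer_prim).
  by rewrite mean_outer_prim0 subr0.
by move=> t /andP[t0 _]; rewrite /mean_outer mean_tE.
Qed.

Lemma lagE_cov_add_mean_outer :
  lagE mu dt (fun t => cov_t A L Q Pa t + mean_t A u xa t *m (mean_t A u xa t)^T) =
  lagE mu dt (cov_t A L Q Pa) + lagE mu dt (fun t => mean_t A u xa t *m (mean_t A u xa t)^T).
Proof.
rewrite lagE_mean_outer_prim (lagE_FTC (F := cov_t A L Q Pa) mxcont_gt_cov_form _ mxderive_gt_cov_prim); last first.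
  by move=> t /andP[t0 _]; exact: cov_tE.
have dsum := mxderive_gtD mxderive_gt_cov_prim mxderive_gt_mean_outer_prim.
rewrite (lagE_FTC (mxcont_gtD mxcont_gt_cov_form mxcont_gt_mean_outer) _
  (mxderive_gt_eq dsum (fun t _ => esym (scalerDr _ _ _)))).
  by rewrite cov_prim0 mean_outer_prim0 addr0 !subr0.
by move=> t /andP[t0 _]; rewrite cov_tE // /mean_outer mean_tE.
Qed.

Lemma mean_outer_primE : mean_outer_prim dt =
  c *: mxint `[0, dt] (fun t => expm (t *: (A - (mu / 2)%:M)) *m xa *m xa^T
                                 *m expm (t *: (A - (mu / 2)%:M)^T))
  + c *: mxint `[0, dt] (fun t => expm (t *: (A - mu%:M)) *m xa *m u^T
                                   *m mxint `[0, t] (fun tau => expm (tau *: A^T)))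
  + (c *: mxint `[0, dt] (fun t => expm (t *: (A - mu%:M)) *m xa *m u^T
                                    *m mxint `[0, t] (fun tau => expm (tau *: A^T))))^T
  + (- ((ex dt / (1 - ex dt)) *: (mxint `[0, dt] (fun tau => expm (tau *: A)) *m u *m u^T
          *m mxint `[0, dt] (fun tau => expm (tau *: A^T))))
     + d *: mxint `[0, dt] (fun t => expm (t *: (A - mu%:M)) *m u *m u^T
                                   *m mxint `[0, t] (fun tau => expm (tau *: A^T)))
     + (d *: mxint `[0, dt] (fun t => expm (t *: (A - mu%:M)) *m u *m u^T
                                   *m mxint `[0, t] (fun tau => expm (tau *: A^T))))^T).
Proof.
have dt0 : 0 <= dt by exact: ltW.
rewrite (eq_mxint_itv (G := wxx)); last first.
  move=> t _; rewrite [(A - _)^T]raddfB /= tr_scalar_mx !expm_subr_scalar /wxx.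
  rewrite -!scalemxAl -!scalemxAr !scalerA -expRD.
  by congr (expR _ *: _); field.
rewrite mxint_wxx // (eq_mxint_itv (G := wxu)); last first.
  move=> t /andP[t0 _] /=; rewrite mxint_expm_tr // expm_subr_scalar /wxu.
  by rewrite -!scalemxAl trmx_mul !mulmxA.
rewrite mxint_wxu // mxint_expm // mxint_expm_tr //.
rewrite -[intexpA dt *m u *m u^T *m _]mulmxA -trmx_mul -/(Huu dt).
rewrite (eq_mxint_itv (G := wuu)); last first.
  move=> t /andP[t0 _] /=; rewrite mxint_expm_tr // expm_subr_scalar /wuu.
  by rewrite -!scalemxAl trmx_mul !mulmxA.
rewrite mxint_wuu // /mean_outer_prim !linearZ /=.
move: (Ixx dt) (Ixu dt) (Iuu dt) (Huu dt) => X1 X2 X3 X4.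
have := one_sub_expR_neq0; move: (1 - ex dt) => D D0.
by apply/matrixP => i j; rewrite !mxE; field.
Qed.

End BirthMoments.

Unset Implicit Arguments. Set Strict Implicit.

Theorem proposition1 (R : realType) (nx nb : nat) (hnx : (0 < nx)%N) (hnb : (0 < nb)%N)
  (A : 'M[R]_nx) (u : 'cV[R]_nx) (L : 'M[R]_(nx, nb)) (Q : 'M[R]_nb)
  (xa : 'cV[R]_nx) (Pa : 'M[R]_nx) (mu dt : R)
  (hQ : is_cov Q) (hPa : is_cov Pa) (hmu : 0 < mu) (hdt : 0 < dt) :
  let c := mu / (1 - expR (- mu * dt)) in
  let e := expR (- mu * dt) / (1 - expR (- mu * dt)) in
  let d := 1 / (1 - expR (- mu * dt)) in
  let Ab : 'M[R]_(nx + 1) := block_mx (A - mu%:M) xa 0 0 in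
  let Abu : 'M[R]_(nx + (1 + 1)) :=
    block_mx (A - mu%:M) (row_mx u 0) 0
             (block_mx ((- mu)%:M : 'M[R]_1) 1 0 0) in
  let xb1 : 'cV[R]_nx :=
    c *: (row_mx (1%:M : 'M[R]_nx) (0 : 'M[R]_(nx, 1)) *m expm (dt *: Ab)
          *m col_mx (0 : 'M[R]_(nx, 1)) (1 : 'M[R]_1)) in
  let xb2 : 'cV[R]_nx :=
    c *: (row_mx (1%:M : 'M[R]_nx) (0 : 'M[R]_(nx, 1 + 1)) *m expm (dt *: Abu)
          *m col_mx (0 : 'M[R]_(nx, 1)) (col_mx (0 : 'M[R]_1) (1 : 'M[R]_1))) in
  let xb := birth_mean A u xa mu dt in
  let Ah := A - (mu / 2)%:M in
  let Am := A - mu%:M in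
  let Cb := L *m Q *m L^T + mu *: Pa in
  let ECT : 'M[R]_nx :=
    - (e *: mxint `[0, dt] (fun tau => expm (tau *: A) *m L *m Q *m L^T *m expm (tau *: A^T)))
    + d *: mxint `[0, dt] (fun t => expm (t *: Ah) *m Cb *m expm (t *: Ah^T)) in
  let Sxx : 'M[R]_nx :=
    c *: mxint `[0, dt] (fun t => expm (t *: Ah) *m xa *m xa^T *m expm (t *: Ah^T)) in
  let Sxu : 'M[R]_nx :=
    c *: mxint `[0, dt] (fun t => expm (t *: Am) *m xa *m u^T
                                   *m mxint `[0, t] (fun tau => expm (tau *: A^T))) in
  let Suu1 : 'M[R]_nx :=
    e *: (mxint `[0, dt] (fun tau => expm (tau *: A)) *m u *m u^T
          *m mxint `[0, dt] (fun tau => expm (tau *: A^T))) in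
  let Suu2 : 'M[R]_nx :=
    d *: mxint `[0, dt] (fun t => expm (t *: Am) *m u *m u^T
                                   *m mxint `[0, t] (fun tau => expm (tau *: A^T))) in
  let Suu := - Suu1 + Suu2 + Suu2^T in
  let CmT : 'M[R]_nx :=
    lagE mu dt (fun t => mean_t A u xa t *m (mean_t A u xa t)^T) - xb *m xb^T in
  [/\ xb = xb1 + xb2,
      lagE mu dt (cov_t A L Q Pa) = ECT,
      CmT = Sxx + Sxu + Sxu^T + Suu - xb *m xb^T
    & birth_cov A L Q Pa u xa mu dt = CmT + lagE mu dt (cov_t A L Q Pa)].
Proof.
(* The identities hold without hnx, hnb, hQ and hPa. *)
move=> c e d Ab Abu xb1 xb2 xb Ah Am Cb ECT Sxx Sxu Suu1 Suu2 Suu CmT.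
have mean_eq : xb = xb1 + xb2.
  by rewrite /xb /xb1 /xb2 /Ab /Abu birth_meanE // expm_Ab_corner // expm_Abu_corner // scalerDr.
have cov_eq : lagE mu dt (cov_t A L Q Pa) = ECT by rewrite lagE_cov_t.
have mean_cov_eq : CmT = Sxx + Sxu + Sxu^T + Suu - xb *m xb^T.
  by rewrite /CmT lagE_mean_outer_prim // mean_outer_primE.
split => //.
by rewrite /birth_cov /CmT lagE_cov_add_mean_outer // -/xb -addrA addrC.
Qed.
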